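(* Let $(X,\mathcal A)$ be a measurable space and $h,v:X\to X$ bi-measurable one-to-one maps such that $h(X)$ and $v(X)$ form a partition of $X$. Let $B\in\mathcal A$ be such that $X=\bigcup_{w\in\mathcal M(h,v)}wB$. Then: (1) if $\mu,\nu$ are two $\{h,v\}$-invariant measures on $X$ that are equal on $B$, then $\mu=\nu$ on $X$; (2) every measure that is $\mathcal M(h,v)$-invariant on $B$ is the restriction to $B$ of an $\mathcal M(h,v)$-invariant measure on $X$; (3) if $h(X\setminus B)\cap B=v(X\setminus B)\cap B=\emptyset$, then every measure that is $\{h,v\}$-invariant on $B$ is the restriction to $B$ of an $\mathcal M(h,v)$-invariant measure on $X$.
   Context: A map $g:X\to X$ is bi-measurable if it is measurable and $gA\in\mathcal A$ for all $A\in\mathcal A$. $\mathcal M(h,v)$ is the monoid generated by $h,v$ under composition, containing the identity. For a set $E$ of bi-measurable one-to-one maps and $B\in\mathcal A$, a measure $\mu$ on the measurable subsets of $B$ is $E$-invariant on $B$ if for all measurable $A\subset B$ and all $g\in E$, $gA\subset B$ implies $\mu(gA)=\mu(A)$. A measure on $X$ is $E$-invariant if it is $E$-invariant on $B=X$. *)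

From HB Require Import structures.
From mathcomp Require Import all_boot all_order all_algebra.
From mathcomp Require Import all_classical all_reals all_analysis.
Set Implicit Arguments. Unset Strict Implicit. Unset Printing Implicit Defensive.
Import Order.TTheory GRing.Theory Num.Theory.
Local Open Scope classical_set_scope.
Local Open Scope ring_scope.

Section Defs.
Context {d : measure_display} {T : measurableType d} {R : realType}.

Definition bimeasurable (g : T -> T) : Prop :=
  measurable_fun setT g /\ (forall A, measurable A -> measurable (g @` A)).

Inductive monoid_gen (h v : T -> T) : (T -> T) -> Prop :=
  | mg_id : monoid_gen h v id
  | mg_h w : monoid_gen h v w -> monoid_gen h v (h \o w)
  | mg_v w : monoid_gen h v w -> monoid_gen h v (v \o w).

Definition pair_maps (h v : T -> T) : set (T -> T) := [set h; v].

(* mu is a measure on the measurable subsets of B (its values elsewhere are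
   irrelevant) *)
Definition measure_on (B : set T) (mu : set T -> \bar R) : Prop :=
  [/\ mu set0 = 0%E,
      (forall A, measurable A -> A `<=` B -> (0 <= mu A)%E) &
      (forall F : nat -> set T, (forall n, measurable (F n)) ->
         (forall n, F n `<=` B) -> trivIset setT F ->
         (fun n => (\sum_(0 <= i < n) mu (F i))%E) @ \oo --> mu (\bigcup_n F n))].

Definition invariant_on (E : set (T -> T)) (B : set T) (mu : set T -> \bar R)
  : Prop :=
  forall A, measurable A -> A `<=` B -> forall g, E g ->
    g @` A `<=` B -> mu (g @` A) = mu A.

End Defs.

From HB Require Import structures.
From mathcomp Require Import all_boot all_order all_algebra.
From mathcomp Require Import all_classical all_reals all_analysis.
Import Order.TTheory GRing.Theory Num.Theory.
Local Open Scope classical_set_scope.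
Local Open Scope ring_scope.

(* Because h and v are injective with disjoint ranges, the monoid M(h,v) acts
   freely: if w x = w' y and w' is no longer than w, then w' is a prefix of w
   and the remaining suffix of w maps x to y.  Enumerate the words as
   w_0, w_1, ... and disjointify the images w_n B into tiles D_n; these cover
   X, so every measurable A is the disjoint union of the sets w_n E_n(A), where
   E_n(A) = w_n^-1(A ∩ D_n) is a measurable subset of B.  An invariant
   measure gives w_n E_n(A) the mass of E_n(A), whence (1).  For (2),
   nu(A) = sum_n mu(E_n(A)) is a measure; freeness turns every equality
   w P = w' Q between images of subsets of B into Q = u P for a word u, which
   makes nu invariant and equal to mu on B.  Under the hypothesis of (3), a
   word carrying a subset of B into B keeps it inside B after each letter, so
   {h,v}-invariance on B already is M(h,v)-invariance on B, and (2) applies. *)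

Set Implicit Arguments.
Unset Strict Implicit.

Lemma trivIset_image_inj (T U I : Type) (D : set I) (f : T -> U) (F : I -> set T) :
  injective f -> trivIset D F -> trivIset D (fun i => f @` F i).
Proof.
move=> f_inj tF i j Di Dj [_ [[a Fa <-] [b Fb fba]]]; apply: tF => //.
by exists a; split=> //; rewrite -(f_inj _ _ fba).
Qed.

Lemma trivIset_preimage (T U I : Type) (D : set I) (f : T -> U) (F : I -> set U) :
  trivIset D F -> trivIset D (fun i => f @^-1` F i).
Proof. by move=> tF i j Di Dj [x [Fi Fj]]; apply: tF => //; exists (f x). Qed.

Lemma measurable_funT_preimage d d' (T : measurableType d) (U : measurableType d')
    (f : T -> U) (Y : set U) :
  measurable_fun setT f -> measurable Y -> measurable (f @^-1` Y).
Proof. by move=> mf mY; rewrite -[X in measurable X]setTI; exact: mf. Qed.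

Lemma image_setI_preimage (T U : Type) (f : T -> U) (A : set T) (Y : set U) :
  f @` (A `&` f @^-1` Y) = f @` A `&` Y.
Proof.
apply/seteqP; split=> [_ [x [Ax Yx] <-]|_ [[x Ax <-] Yx]]; last by exists x.
by split=> //; exists x.
Qed.

Section bimeasurable.
Context d (T : measurableType d).

Lemma bimeasurable_id : bimeasurable (@id T).
Proof. by split=> // A mA; rewrite image_id. Qed.

Lemma bimeasurable_comp (f g : T -> T) :
  bimeasurable f -> bimeasurable g -> bimeasurable (f \o g).
Proof.
move=> [mf f_img] [mg g_img]; split; first exact: measurableT_comp.
by move=> A mA; rewrite -image_comp; apply/f_img/g_img.
Qed.

End bimeasurable.

Section measure_on.
Context d (T : measurableType d) (R : realType) (B : set T) (mu : set T -> \bar R).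
Hypothesis mu_on_B : measure_on B mu.

Lemma measure_on_semi_bigcup (F : nat -> set T) :
  (forall n, measurable (F n)) -> (forall n, F n `<=` B) -> trivIset setT F ->
  mu (\bigcup_n F n) = (\sum_(n <oo) mu (F n))%E.
Proof. by case: mu_on_B => _ _ mu_sa mF FB tF; apply/esym/cvg_lim/mu_sa. Qed.

End measure_on.

Section words.
Context d (T : measurableType d) (h v : T -> T).

Definition letter (b : bool) : T -> T := if b then h else v.

Fixpoint word_map (s : seq bool) : T -> T :=
  if s is b :: s' then letter b \o word_map s' else id.

Lemma word_map_cat s t : word_map (s ++ t) = word_map s \o word_map t.
Proof. by elim: s => //= b s ->. Qed.

Lemma monoid_gen_word_map s : monoid_gen h v (word_map s).
Proof. by elim: s => [|[] s IHs] /=; constructor. Qed.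

Lemma monoid_gen_word w : monoid_gen h v w -> exists s, w = word_map s.
Proof.
elim=> [|w' _ [s ->]|w' _ [s ->]]; first by exists [::].
- by exists (true :: s).
- by exists (false :: s).
Qed.

Hypotheses (h_inj : injective h) (v_inj : injective v).
Hypothesis hv_disj : range h `&` range v = set0.

Lemma letter_inj b : injective (letter b).
Proof. by case: b. Qed.

Lemma word_map_inj s : injective (word_map s).
Proof. by elim: s => //= b s IHs x y /letter_inj /IHs. Qed.

Lemma letter_label_eq a b x y : letter a x = letter b y -> a = b.
Proof.
have hv_neq x' y' : h x' <> v y'.
  move=> hv; have : (range h `&` range v) (h x') by split; [exists x'|exists y'].
  by rewrite hv_disj.
by case: a; case: b => //= ab; exfalso;
  [exact: hv_neq ab|exact: hv_neq (esym ab)].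
Qed.

Lemma word_map_eq_drop u w x y : (size w <= size u)%N ->
  word_map u x = word_map w y -> word_map (drop (size w) u) x = y.
Proof.
elim: u w => [|a u IHu] [|b w] //= wu /[dup] /letter_label_eq <- /letter_inj.
exact: IHu.
Qed.

Lemma image_word_map_drop u w P Q : (size w <= size u)%N ->
  word_map u @` P = word_map w @` Q -> word_map (drop (size w) u) @` P = Q.
Proof.
move=> wu uPwQ; apply/seteqP; split=> [_ [p Pp <-]|q Qq].
- have [q Qq /esym qp] : (word_map w @` Q) (word_map u p) by rewrite -uPwQ; exists p.
  by rewrite (word_map_eq_drop wu qp).
- have [p Pp pq] : (word_map u @` P) (word_map w q) by rewrite uPwQ; exists q.
  by exists p; rewrite // (word_map_eq_drop wu pq).
Qed.

Lemma bimeasurable_word_map s :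
  bimeasurable h -> bimeasurable v -> bimeasurable (word_map s).
Proof.
move=> hM vM; elim: s => [|b s IHs] /=; first exact: bimeasurable_id.
by apply: bimeasurable_comp => //; case: b.
Qed.

End words.

Section invariance.
Context d (T : measurableType d) (R : realType) (h v : T -> T).
Hypotheses (hM : bimeasurable h) (vM : bimeasurable v).

Lemma invariant_on_monoid_gen (B : set T) (mu : set T -> \bar R) :
  h @` (~` B) `&` B = set0 -> v @` (~` B) `&` B = set0 ->
  invariant_on (pair_maps h v) B mu -> invariant_on (monoid_gen h v) B mu.
Proof.
move=> hB vB mu_inv A mA AB _ /monoid_gen_word [s ->].
elim: s => [|b s IHs] /=; first by rewrite image_id.
rewrite -image_comp => bsAB.
have sAB : word_map h v s @` A `<=` B.
  move=> _ [a Aa <-]; apply: contrapT => nB.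
  have : (letter h v b @` (~` B) `&` B) (letter h v b (word_map h v s a)).
    by split; [exists (word_map h v s a)|apply/bsAB/imageP/imageP].
  by case: b {bsAB}; [rewrite hB|rewrite vB].
rewrite (mu_inv _ _ sAB (letter h v b)) ?IHs //.
- exact: (bimeasurable_word_map s hM vM).2.
- by case: b {bsAB sAB}; [left|right].
Qed.

Lemma invariant_onT_monoid_gen (mu : set T -> \bar R) :
  invariant_on (pair_maps h v) setT mu -> invariant_on (monoid_gen h v) setT mu.
Proof. by apply: invariant_on_monoid_gen; rewrite setCT image_set0 set0I. Qed.

Lemma invariant_onT_word_image (mu : set T -> \bar R) s A :
  invariant_on (monoid_gen h v) setT mu -> measurable A ->
  mu (word_map h v s @` A) = mu A.
Proof. by move=> mu_inv mA; apply: mu_inv => //; exact: monoid_gen_word_map. Qed.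

Hypotheses (h_inj : injective h) (v_inj : injective v).
Hypothesis hv_disj : range h `&` range v = set0.

Lemma invariant_on_word_image_eq (B : set T) (mu : set T -> \bar R) u w P Q :
  invariant_on (monoid_gen h v) B mu ->
  measurable P -> measurable Q -> P `<=` B -> Q `<=` B ->
  word_map h v u @` P = word_map h v w @` Q -> mu P = mu Q.
Proof.
move=> mu_inv mP mQ PB QB.
wlog wu : u w P Q mP mQ PB QB / (size w <= size u)%N.
  move=> wlog_wu; case: (leqP (size w) (size u)) => [|/ltnW uw]; first exact: wlog_wu.
  by move=> /esym/(wlog_wu _ _ _ _ mQ mP QB PB uw) ->.
move=> /(image_word_map_drop h_inj v_inj hv_disj wu) QE.
by rewrite -QE (mu_inv _ mP PB) ?QE //; exact: monoid_gen_word_map.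
Qed.

End invariance.

Section tiling.
Context d (T : measurableType d) (h v : T -> T) (B : set T).
Hypotheses (hM : bimeasurable h) (vM : bimeasurable v).
Hypotheses (h_inj : injective h) (v_inj : injective v) (mB : measurable B).
Hypothesis B_gen : forall x, exists w, monoid_gen h v w /\ exists2 b, B b & w b = x.

Definition nth_word (n : nat) : seq bool := odflt [::] (unpickle n).

Local Notation W n := (word_map h v (nth_word n)).

Definition tile : nat -> set T := seqDU (fun n => W n @` B).

Definition tile_preimage n (A : set T) : set T := W n @^-1` (A `&` tile n).

Lemma measurable_tile n : measurable (tile n).
Proof. by apply: seqDU_measurable => k; apply: (bimeasurable_word_map _ hM vM).2. Qed.

Lemma trivIset_tile : trivIset setT tile.
Proof. exact: trivIset_seqDU. Qed.

Lemma bigcup_tile : \bigcup_n tile n = setT.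
Proof.
rewrite -seqDU_bigcup_eq; apply/seteqP; split=> // x _.
have [_ [/monoid_gen_word [s ->] [b Bb <-]]] := B_gen x.
by exists (pickle s) => //; rewrite /nth_word pickleK; exists b.
Qed.

Lemma tile_preimage_subB n A : tile_preimage n A `<=` B.
Proof. by move=> y [_ [[b Bb /(word_map_inj h_inj v_inj) <-] _]]. Qed.

Lemma image_tile_preimage n A : W n @` tile_preimage n A = A `&` tile n.
Proof.
apply/seteqP; split=> [_ [y Ey <-] //|x [Ax Dx]].
by have [[b Bb bx] _] := Dx; exists b; rewrite /tile_preimage /= bx.
Qed.

Lemma measurable_tile_preimage n A : measurable A -> measurable (tile_preimage n A).
Proof.
move=> mA; apply: measurable_funT_preimage (measurableI _ _ mA (measurable_tile n)).
exact: (bimeasurable_word_map _ hM vM).1.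
Qed.

Lemma bigcup_image_tile_preimage A : \bigcup_n W n @` tile_preimage n A = A.
Proof.
under eq_bigcupr do rewrite image_tile_preimage.
by rewrite -setI_bigcupr bigcup_tile setIT.
Qed.

Lemma trivIset_image_tile_preimage A :
  trivIset setT (fun n => W n @` tile_preimage n A).
Proof.
under eq_fun do rewrite image_tile_preimage.
exact/trivIset_setIl/trivIset_tile.
Qed.

Lemma measure_tile_decomp (R : realType) (mu : {measure set T -> \bar R}) A :
  measurable A -> mu A = (\sum_(n <oo) mu (W n @` tile_preimage n A))%E.
Proof.
move=> mA; rewrite -{1}(bigcup_image_tile_preimage A) measure_semi_bigcup //.
- move=> n; apply: (bimeasurable_word_map _ hM vM).2.
  exact: measurable_tile_preimage.
- exact: trivIset_image_tile_preimage.
- by rewrite bigcup_image_tile_preimage.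
Qed.

Lemma invariant_measure_eq (R : realType) (mu nu : {measure set T -> \bar R}) :
  invariant_on (monoid_gen h v) setT mu -> invariant_on (monoid_gen h v) setT nu ->
  (forall A, measurable A -> A `<=` B -> mu A = nu A) ->
  forall A, measurable A -> mu A = nu A.
Proof.
move=> mu_inv nu_inv muB_nuB A mA.
rewrite (measure_tile_decomp mu mA) (measure_tile_decomp nu mA).
apply: eq_eseriesr => n _; have mE := measurable_tile_preimage n mA.
rewrite !invariant_onT_word_image //.
exact/muB_nuB/tile_preimage_subB.
Qed.

End tiling.

Section invariant_extension.
Local Open Scope ereal_scope.
Context d (T : measurableType d) (R : realType) (h v : T -> T) (B : set T).
Hypotheses (hM : bimeasurable h) (vM : bimeasurable v).
Hypotheses (h_inj : injective h) (v_inj : injective v).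
Hypothesis hv_disj : range h `&` range v = set0.
Hypothesis mB : measurable B.
Hypothesis B_gen : forall x, exists w, monoid_gen h v w /\ exists2 b, B b & w b = x.
Variable mu : set T -> \bar R.
Hypotheses (mu_on_B : measure_on B mu) (mu_inv : invariant_on (monoid_gen h v) B mu).

Local Notation W n := (word_map h v (nth_word n)).

Definition measure_on_ext (A : set T) : \bar R :=
  if `[< measurable A >] then mu (A `&` B) else 0.

Lemma measure_on_extE A : measurable A -> measure_on_ext A = mu (A `&` B).
Proof. by move=> mA; rewrite /measure_on_ext asboolT. Qed.

Let measure_on_ext0 : measure_on_ext set0 = 0.
Proof. by rewrite measure_on_extE // set0I; case: mu_on_B. Qed.

Let measure_on_ext_ge0 A : 0 <= measure_on_ext A.
Proof.
rewrite /measure_on_ext; case: asboolP => // mA; case: mu_on_B => _ mu_ge0 _.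
by apply: mu_ge0; [exact: measurableI|exact: subIsetr].
Qed.

Let measure_on_ext_sigma_additive : semi_sigma_additive measure_on_ext.
Proof.
move=> F mF tF mUF; rewrite measure_on_extE // setI_bigcupl.
under eq_fun do under eq_bigr do rewrite measure_on_extE //.
case: mu_on_B => _ _ mu_sa; apply: mu_sa => [n|n|]; first exact: measurableI.
- exact: subIsetr.
- exact: trivIset_setIr.
Qed.

HB.instance Definition _ := isMeasure.Build _ _ _ measure_on_ext
  measure_on_ext0 measure_on_ext_ge0 measure_on_ext_sigma_additive.

(* The pushforward is a measure only given the measurability of the map, so its
   instance has to be named explicitly. *)
Definition tile_measure n : {measure set T -> \bar R} :=
  mrestr (measure_function_pushforward__canonical__measure_function_Measure
    measure_on_ext (bimeasurable_word_map (nth_word n) hM vM).1)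
    (measurable_tile hM vM mB n).

Definition invariant_extension : {measure set T -> \bar R} := mseries tile_measure 0.

Lemma invariant_extensionE A : measurable A ->
  invariant_extension A = \sum_(n <oo) mu (tile_preimage h v B n A).
Proof.
move=> mA; rewrite /= /mseries; apply: eq_eseriesr => n _ /=.
rewrite /mrestr /pushforward measure_on_extE; last exact: measurable_tile_preimage.
by rewrite setIidl //; exact: tile_preimage_subB.
Qed.

Lemma invariant_extension_word_image s C : measurable C -> C `<=` B ->
  invariant_extension (word_map h v s @` C) = mu C.
Proof.
move=> mC CB; have sM := bimeasurable_word_map s hM vM.
pose C_ n := C `&` word_map h v s @^-1` tile h v B n.
have mC_ n : measurable (C_ n).
  exact: measurableI mC (measurable_funT_preimage sM.1 (measurable_tile hM vM mB n)).
have C_B n : C_ n `<=` B by move=> x [/CB].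
have -> : mu C = \sum_(n <oo) mu (C_ n).
  rewrite -(measure_on_semi_bigcup mu_on_B) //; last first.
    exact/trivIset_setIl/trivIset_preimage/trivIset_tile.
  by rewrite -setI_bigcupr -preimage_bigcup (bigcup_tile B_gen) preimage_setT setIT.
rewrite invariant_extensionE; last exact: sM.2.
apply: eq_eseriesr => n _.
apply: (invariant_on_word_image_eq h_inj v_inj hv_disj (u := nth_word n) (w := s) mu_inv).
- exact/(measurable_tile_preimage hM vM mB)/sM.2.
- exact: mC_.
- exact: tile_preimage_subB.
- exact: C_B.
- by rewrite image_tile_preimage image_setI_preimage.
Qed.

Lemma invariant_extension_restr A : measurable A -> A `<=` B ->
  invariant_extension A = mu A.
Proof.
by move=> mA AB; rewrite -(invariant_extension_word_image [::] mA AB) image_id.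
Qed.

Lemma invariant_extension_invariant :
  invariant_on (monoid_gen h v) setT invariant_extension.
Proof.
move=> A mA _ _ /monoid_gen_word [u ->] _; rewrite (invariant_extensionE mA).
have uAE : word_map h v u @` A =
    \bigcup_n word_map h v (u ++ nth_word n) @` tile_preimage h v B n A.
  rewrite -[in LHS](bigcup_image_tile_preimage B_gen A) image_bigcup.
  by apply: eq_bigcupr => n _; rewrite word_map_cat image_comp.
have uEM n : measurable (word_map h v (u ++ nth_word n) @` tile_preimage h v B n A).
  exact/(bimeasurable_word_map _ hM vM).2/(measurable_tile_preimage hM vM mB).
have uAM : measurable (word_map h v u @` A) := (bimeasurable_word_map u hM vM).2 _ mA.
rewrite uAE measure_semi_bigcup //; last by rewrite -uAE.
- apply: eq_eseriesr => n _; apply: invariant_extension_word_image.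
    exact: (measurable_tile_preimage hM vM mB).
  exact: tile_preimage_subB.
- under eq_fun do rewrite word_map_cat -image_comp.
  exact/trivIset_image_inj/trivIset_image_tile_preimage/word_map_inj.
Qed.

Lemma exists_invariant_extension : exists nu : {measure set T -> \bar R},
  invariant_on (monoid_gen h v) setT nu /\
  forall A, measurable A -> A `<=` B -> nu A = mu A.
Proof.
exists invariant_extension; split.
- exact: invariant_extension_invariant.
- exact: invariant_extension_restr.
Qed.

End invariant_extension.

Theorem lemma8 (d : measure_display) (T : measurableType d) (R : realType)
  (h v : T -> T) (B : set T) :
  bimeasurable h -> bimeasurable v -> injective h -> injective v ->
  range h `&` range v = set0 -> range h `|` range v = setT ->
  measurable B ->
  (forall x : T, exists w, monoid_gen h v w /\ exists2 b, B b & w b = x) ->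
  [/\ (* (1) *)
      (forall mu nu : {measure set T -> \bar R},
         invariant_on (pair_maps h v) setT mu ->
         invariant_on (pair_maps h v) setT nu ->
         (forall A, measurable A -> A `<=` B -> mu A = nu A) ->
         forall A, measurable A -> mu A = nu A),
      (* (2) *)
      (forall mu : set T -> \bar R, measure_on B mu ->
         invariant_on (monoid_gen h v) B mu ->
         exists nu : {measure set T -> \bar R},
           invariant_on (monoid_gen h v) setT nu /\
           forall A, measurable A -> A `<=` B -> nu A = mu A) &
      (* (3) *)
      (h @` (~` B) `&` B = set0 -> v @` (~` B) `&` B = set0 ->
       forall mu : set T -> \bar R, measure_on B mu ->
         invariant_on (pair_maps h v) B mu ->
         exists nu : {measure set T -> \bar R},
           invariant_on (monoid_gen h v) setT nu /\
           forall A, measurable A -> A `<=` B -> nu A = mu A)].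
Proof.
move=> hM vM h_inj v_inj hv_disj _ mB B_gen.
have extend := exists_invariant_extension hM vM h_inj v_inj hv_disj mB B_gen.
split.
- move=> mu nu /(invariant_onT_monoid_gen hM vM) mu_inv.
  move=> /(invariant_onT_monoid_gen hM vM) nu_inv.
  exact: (invariant_measure_eq hM vM h_inj v_inj mB B_gen mu_inv nu_inv).
- by move=> mu mu_on_B mu_inv; exact: extend.
- move=> hB vB mu mu_on_B /(invariant_on_monoid_gen hM vM hB vB) mu_inv.
  exact: extend.
Qed.
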